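(* Let $U=\{\xi_1,\dots,\xi_p\}\subset\mathbb{R}^k$ be finite, and for $j\in\Lambda=\{1,\dots,m\}$ let $f_j:\mathbb{R}^n\times U\to\mathbb{R}$ be such that $x\mapsto f_j(x,\xi_i)$ is continuously differentiable for each $i\in\bar\Lambda=\{1,\dots,p\}$. Let $\Phi=(\Phi_1,\dots,\Phi_m)$ with $\Phi_j(x)=\max_{i\in\bar\Lambda} f_j(x,\xi_i)$. If $\tilde x\in\mathbb{R}^n$ is a weak Pareto optimal solution for $\Phi$, then $\tilde x$ is a critical point for $\Phi$. Moreover, if in addition $x\mapsto f_j(x,\xi_i)$ is convex for every $i\in\bar\Lambda$ and $j\in\Lambda$, then every critical point for $\Phi$ is a weak Pareto optimal solution for $\Phi$; thus under convexity weak Pareto optimality and criticality are equivalent.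
   Context: For $x\in\mathbb{R}^n$ and $j\in\Lambda$, $I_j(x)=\{i\in\bar\Lambda: f_j(x,\xi_i)=\Phi_j(x)\}$. A point $x^*$ is a critical point for $\Phi$ if there is no $v\in\mathbb{R}^n$ such that $\nabla f_j(x^*,\xi_i)^Tv<0$ for all $j\in\Lambda$ and all $i\in I_j(x^* )$. A point $x^*$ is a weak Pareto optimal solution for $\Phi$ if there is no $x\in\mathbb{R}^n$ with $\Phi_j(x)<\Phi_j(x^* )$ for all $j\in\Lambda$. Gradients are with respect to $x$. *)

From HB Require Import structures.
From mathcomp Require Import all_boot all_order all_algebra.
From mathcomp Require Import all_classical all_reals all_analysis.
Set Implicit Arguments. Unset Strict Implicit. Unset Printing Implicit Defensive.
Import Order.TTheory GRing.Theory Num.Theory.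
Import numFieldNormedType.Exports.
Local Open Scope ring_scope.

Section Defs.
Variables (R : realType) (n k m p : nat).
Variable (Hp : (0 < p)%N).
Variable (xi : 'I_p -> 'rV[R]_k).
Variable (f : 'I_m -> 'rV[R]_n -> 'rV[R]_k -> R).

(* Phi_j(x) = max_{i} f_j(x, xi_i); the seed of the fold is itself one of
   the terms (index 0), so this is exactly the maximum over the nonempty index set. *)
Definition Phi (j : 'I_m) (x : 'rV[R]_n) : R :=
  \big[Num.max/ f j x (xi (Ordinal Hp))]_(i < p) f j x (xi i).

Definition active (j : 'I_m) (x : 'rV[R]_n) (i : 'I_p) : Prop :=
  f j x (xi i) = Phi j x.

(* grad f_j(x,xi_i)^T v is the differential applied to v *)
Definition critical (x : 'rV[R]_n) : Prop :=
  ~ exists v : 'rV[R]_n, forall (j : 'I_m) (i : 'I_p),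
      active j x i -> 'd (fun y => f j y (xi i)) x v < 0.

Definition weak_pareto (x : 'rV[R]_n) : Prop :=
  ~ exists y : 'rV[R]_n, forall j : 'I_m, Phi j y < Phi j x.
End Defs.

Definition convex_fun (R : realType) (n : nat) (g : 'rV[R]_n -> R) : Prop :=
  forall (x y : 'rV[R]_n) (t : R), 0 <= t -> t <= 1 ->
    g (t *: x + (1 - t) *: y) <= t * g x + (1 - t) * g y.

(* continuously differentiable: differentiable everywhere and the derivative
   is continuous (in finite dimension: continuity of x |-> 'd g x v for each v) *)
Definition C1 (R : realType) (n : nat) (g : 'rV[R]_n -> R) : Prop :=
  (forall x, differentiable g x) /\ (forall v : 'rV[R]_n, continuous (fun x => 'd g x v)).

(* If a direction v were a first-order descent direction for every active
   piece f_j(., xi_i) at x, then for small t > 0 the point x + t v would push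
   every active piece strictly below Phi_j(x), while the inactive pieces,
   already strictly below Phi_j(x), stay there by continuity; so every Phi_j
   would decrease, contradicting weak Pareto optimality.  Conversely, under
   convexity the gradient inequality f(y) - f(x) >= 'd f x (y - x) turns any
   point y improving every Phi_j into the common descent direction y - x. *)

From mathcomp Require Import all_boot all_order all_algebra.
From mathcomp Require Import all_classical all_reals all_analysis.
From mathcomp Require Import lra.
Import Order.TTheory GRing.Theory Num.Theory.
Import numFieldNormedType.Exports.
Local Open Scope ring_scope.
Local Open Scope classical_set_scope.

Section DirectionalLimits.
Context {R : realFieldType} {V : normedModType R} {g : V -> R} {x : V} (v : V).
Hypothesis dg : differentiable g x.

Lemma diff_quotient_at_right :
  (fun t : R => t^-1 * (g (t *: v + x) - g x)) @ 0^'+ --> 'd g x v.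
Proof.
rewrite -deriveE //; apply: cvg_dnbhs_at_right.
(* [derivable g x v] unfolds to the convergence of this quotient at [0^']. *)
have quot_cvg : (fun t : R => t^-1 * (g (t *: v + x) - g x)) @ 0^' --> 'D_v g x.
  exact: diff_derivable.
exact: quot_cvg.
Qed.

Lemma cvg_dir_at_right : (fun t : R => g (t *: v + x)) @ 0^'+ --> g x.
Proof.
have tv_x : (fun t : R => t *: v + x) @ 0^'+ --> x.
  rewrite -[X in _ --> X]add0r -(scale0r v).
  apply: cvgD; last exact: cvg_cst.
  by apply: cvgZl; apply: cvg_at_right_filter; exact: cvg_id.
exact: cvg_comp tv_x (differentiable_continuous dg).
Qed.

Lemma near_dir_lt c : g x < c -> \forall t \near 0^'+, g (t *: v + x) < c.
Proof. exact: cvgr_lt cvg_dir_at_right c. Qed.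

Lemma near_descent_dir :
  'd g x v < 0 -> \forall t \near 0^'+, g (t *: v + x) < g x.
Proof.
move=> /(cvgr_lt _ diff_quotient_at_right) quot_lt0; near=> t.
have t_gt0 : 0 < t by near: t; exact: nbhs_right_gt.
have : t^-1 * (g (t *: v + x) - g x) < 0 by near: t; exact: quot_lt0.
by rewrite pmulr_rlt0 ?invr_gt0 // subr_lt0.
Unshelve. all: by end_near.
Qed.

End DirectionalLimits.

Lemma convex_diff_le {R : realType} {n : nat} {g : 'rV[R]_n -> R} {x : 'rV[R]_n}
    (y : 'rV[R]_n) :
  convex_fun g -> differentiable g x -> 'd g x (y - x) <= g y - g x.
Proof.
move=> cvx dg.
apply: (ler_cvg_to (diff_quotient_at_right (y - x) dg) (cvg_cst (g y - g x))).
near=> t.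
have t_gt0 : 0 < t by near: t; exact: nbhs_right_gt.
have t_lt1 : t < 1 by near: t; exact: nbhs_right_lt ltr01.
have chord : t *: y + (1 - t) *: x = t *: (y - x) + x.
  by rewrite scalerBl scale1r scalerBr addrA addrAC.
rewrite ler_pdivrMl // lerBlDr.
by move: (cvx y x t (ltW t_gt0) (ltW t_lt1)); rewrite chord; lra.
Unshelve. all: by end_near.
Qed.

Section MaxOfPieces.
Variables (R : realType) (n k m p : nat) (Hp : (0 < p)%N).
Variables (xi : 'I_p -> 'rV[R]_k) (f : 'I_m -> 'rV[R]_n -> 'rV[R]_k -> R).

Local Notation Phi := (Phi Hp xi f).
Local Notation active := (active Hp xi f).

Lemma Phi_ge j x i : f j x (xi i) <= Phi j x.
Proof. exact: le_bigmax. Qed.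

Lemma Phi_lt j x c : (forall i, f j x (xi i) < c) -> Phi j x < c.
Proof. by move=> lt_c; apply: bigmax_lt. Qed.

Lemma inactive_lt_Phi {j x i} : ~ active j x i -> f j x (xi i) < Phi j x.
Proof. by move=> /eqP nact; rewrite lt_neqAle nact Phi_ge. Qed.

Lemma weak_pareto_critical x :
  (forall j i, differentiable (fun y => f j y (xi i)) x) ->
  weak_pareto Hp xi f x -> critical Hp xi f x.
Proof.
move=> df wp [v descent]; apply: wp.
have below : \forall t \near 0^'+, forall j i, f j (t *: v + x) (xi i) < Phi j x.
  apply: filter_forall => j; apply: filter_forall => i.
  have [act|nact] := pselect (active j x i).
  - rewrite -act; exact: near_descent_dir v (df j i) (descent j i act).
  - exact: near_dir_lt v (df j i) _ (inactive_lt_Phi nact).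
have [t below_t] := filter_ex below.
by exists (t *: v + x) => j; apply: Phi_lt; exact: below_t.
Qed.

Lemma critical_weak_pareto x :
  (forall j i, convex_fun (fun y => f j y (xi i))) ->
  (forall j i, differentiable (fun y => f j y (xi i)) x) ->
  critical Hp xi f x -> weak_pareto Hp xi f x.
Proof.
move=> cvx df crit [y improve]; apply: crit; exists (y - x) => j i act.
apply: le_lt_trans (convex_diff_le y (cvx j i) (df j i)) _.
by rewrite subr_lt0 act; exact: le_lt_trans (Phi_ge j y i) (improve j).
Qed.

End MaxOfPieces.

Theorem lemma4p2 (R : realType) (n k m p : nat) (Hp : (0 < p)%N)
  (xi : 'I_p -> 'rV[R]_k) (f : 'I_m -> 'rV[R]_n -> 'rV[R]_k -> R) :
  (forall (j : 'I_m) (i : 'I_p), C1 (fun x => f j x (xi i))) ->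
  (forall xt : 'rV[R]_n, weak_pareto Hp xi f xt -> critical Hp xi f xt) /\
  ((forall (j : 'I_m) (i : 'I_p), convex_fun (fun x => f j x (xi i))) ->
   forall xs : 'rV[R]_n, critical Hp xi f xs -> weak_pareto Hp xi f xs).
Proof.
move=> C1f; have df j i x := (C1f j i).1 x.
split=> [xt | cvx xs].
- exact: weak_pareto_critical (fun j i => df j i xt).
- exact: critical_weak_pareto cvx (fun j i => df j i xs).
Qed.
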